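(* For every finitely complete category $\mathbb{E}$, the category $\mathsf{SKB}\mathbb{E}$ of internal left skew braces in $\mathbb{E}$ satisfies (Huq=Smith). In particular, the category $\mathsf{SKB}\,Top$ of topological left skew braces satisfies (Huq=Smith).
   Context: A (left) skew brace is a triple $(A,*,\circ)$ with $(A,* )$ and $(A,\circ)$ groups with common identity such that $a\circ(b*c)=(a\circ b)*a^{-*}*(a\circ c)$ for all $a,b,c$ ($a^{-*}$ the $*$-inverse). An internal skew brace in $\mathbb{E}$ is an object $A$ with two internal group structures with the same unit satisfying this identity (expressed by morphisms in $\mathbb{E}$); morphisms are morphisms of $\mathbb{E}$ that are internal homomorphisms for both. $\mathsf{SKB}\mathbb{E}$ is pointed and protomodular, hence Mal'tsev. In a pointed category, for an equivalence relation $R$ on $X$ with projections $d_0,d_1$, $I_R\rightarrowtail X$ is $d_1\circ\bar x$ where $\bar x\colon I_R\to R$ is the pullback of $d_0$ along $0\to X$. Subobjects $u\colon U\rightarrowtail X$, $v\colon V\rightarrowtail X$ cooperate, $[u,v]=0$, if there is $\varphi\colon U\times V\to X$ with $\varphi\langle 1_U,0\rangle=u$, $\varphi\langle 0,1_V\rangle=v$. For equivalence relations $R,S$ on $X$, $R\times_XS$ is the pullback of $d_1^R$ and $d_0^S$ (triples $xRySz$), with $l_R(xRy)=xRySy$, $r_S(ySz)=yRySz$; $[R,S]=0$ means there is $p\colon R\times_XS\to X$ with $pr_S=d_1^S$ and $pl_R=d_0^R$. (Huq=Smith) means: for every object $X$ and all equivalence relations $R,S$ on $X$, $[I_R,I_S]=0$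 implies $[R,S]=0$. *)

From Stdlib Require Import ProofIrrelevance.
From mathcomp Require Import all_boot all_classical topology.

Set Implicit Arguments.
Unset Strict Implicit.
Unset Printing Implicit Defensive.

Record Category := {
  Obj :> Type;
  Hom : Obj -> Obj -> Type;
  idm : forall A : Obj, Hom A A;
  comp : forall A B C : Obj, Hom B C -> Hom A B -> Hom A C;
  comp_assoc : forall (A B C D : Obj) (h : Hom C D) (g : Hom B C) (f : Hom A B),
      comp h (comp g f) = comp (comp h g) f;
  comp_idl : forall (A B : Obj) (f : Hom A B), comp (idm B) f = f;
  comp_idr : forall (A B : Obj) (f : Hom A B), comp f (idm A) = f }.

Arguments Hom {c} _ _.
Arguments idm {c} A.
Arguments comp {c A B C} _ _.

Declare Scope cat_scope.
Notation "g <o f" := (comp g f) (at level 40, left associativity) : cat_scope.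
Open Scope cat_scope.

Record Terminal (C : Category) := {
  term :> Obj C;
  bang : forall X : Obj C, Hom X term;
  bang_uniq : forall (X : Obj C) (f : Hom X term), f = bang X }.

Record BinProduct (C : Category) (A B : Obj C) := {
  prod_obj :> Obj C;
  pr1 : Hom prod_obj A;
  pr2 : Hom prod_obj B;
  pairing : forall X : Obj C, Hom X A -> Hom X B -> Hom X prod_obj;
  pr1_pair : forall (X : Obj C) (f : Hom X A) (g : Hom X B), pr1 <o pairing f g = f;
  pr2_pair : forall (X : Obj C) (f : Hom X A) (g : Hom X B), pr2 <o pairing f g = g;
  pair_uniq : forall (X : Obj C) (f : Hom X A) (g : Hom X B) (h : Hom X prod_obj),
      pr1 <o h = f -> pr2 <o h = g -> h = pairing f g }.

Record Pullback (C : Category) (A B D : Obj C) (f : Hom A D) (g : Hom B D) := {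
  pb_obj :> Obj C;
  pb1 : Hom pb_obj A;
  pb2 : Hom pb_obj B;
  pb_comm : f <o pb1 = g <o pb2;
  pb_pair : forall (X : Obj C) (a : Hom X A) (b : Hom X B),
      f <o a = g <o b -> Hom X pb_obj;
  pb1_pair : forall (X : Obj C) (a : Hom X A) (b : Hom X B) (e : f <o a = g <o b),
      pb1 <o pb_pair e = a;
  pb2_pair : forall (X : Obj C) (a : Hom X A) (b : Hom X B) (e : f <o a = g <o b),
      pb2 <o pb_pair e = b;
  pb_uniq : forall (X : Obj C) (a : Hom X A) (b : Hom X B) (e : f <o a = g <o b)
      (h : Hom X pb_obj),
      pb1 <o h = a -> pb2 <o h = b -> h = pb_pair e }.

Record FinLim (C : Category) := {
  fl_term : Terminal C;
  fl_prod : forall A B : Obj C, BinProduct A B;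
  fl_pb : forall (A B D : Obj C) (f : Hom A D) (g : Hom B D), Pullback f g }.

Section SKB.
Variables (E : Category) (FL : FinLim E).

Definition one : Obj E := fl_term FL.
Definition sq (A : Obj E) : Obj E := fl_prod FL A A.
Definition pr (W A : Obj E) (x y : Hom W A) : Hom W (sq A) :=
  pairing (fl_prod FL A A) x y.
Definition cst (W A : Obj E) (e : Hom one A) : Hom W A :=
  e <o bang (fl_term FL) W.

(** Internal group (m, e, i) on A; the axioms are the usual commutative
    diagrams, stated equivalently (Yoneda) on all generalized elements. *)
Definition IsInternalGroup (A : Obj E) (m : Hom (sq A) A) (e : Hom one A)
    (i : Hom A A) : Prop :=
  (forall W (x y z : Hom W A),
      m <o pr (m <o pr x y) z = m <o pr x (m <o pr y z)) /\
  (forall W (x : Hom W A), m <o pr (cst W e) x = x) /\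
  (forall W (x : Hom W A), m <o pr x (cst W e) = x) /\
  (forall W (x : Hom W A), m <o pr (i <o x) x = cst W e) /\
  (forall W (x : Hom W A), m <o pr x (i <o x) = cst W e).

Record SkewBrace := {
  sb_car :> Obj E;
  sb_star : Hom (sq sb_car) sb_car;
  sb_circ : Hom (sq sb_car) sb_car;
  sb_unit : Hom one sb_car;
  sb_inv_star : Hom sb_car sb_car;
  sb_inv_circ : Hom sb_car sb_car;
  sb_star_grp : IsInternalGroup sb_star sb_unit sb_inv_star;
  sb_circ_grp : IsInternalGroup sb_circ sb_unit sb_inv_circ;
  sb_brace : forall W (a b c : Hom W sb_car),
      sb_circ <o pr a (sb_star <o pr b c)
      = sb_star <o pr (sb_star <o pr (sb_circ <o pr a b) (sb_inv_star <o a))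
                      (sb_circ <o pr a c) }.

Definition IsSKBMorph (X Y : SkewBrace) (f : Hom (sb_car X) (sb_car Y)) : Prop :=
  (forall W (x y : Hom W X),
      f <o (sb_star X <o pr x y) = sb_star Y <o pr (f <o x) (f <o y)) /\
  (forall W (x y : Hom W X),
      f <o (sb_circ X <o pr x y) = sb_circ Y <o pr (f <o x) (f <o y)).

Definition SKBHom (X Y : SkewBrace) := {f : Hom (sb_car X) (sb_car Y) | IsSKBMorph f}.

Lemma SKB_id_morph (X : SkewBrace) : IsSKBMorph (idm (sb_car X)).
Proof.
split=> W x y; rewrite !comp_idl //.
Qed.

Lemma SKB_comp_morph (X Y Z : SkewBrace) (g : SKBHom Y Z) (f : SKBHom X Y) :
  IsSKBMorph (proj1_sig g <o proj1_sig f).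
Proof.
case: g => g [g1 g2]; case: f => f [f1 f2] /=.
split=> W x y; rewrite -comp_assoc ?f1 ?f2 ?g1 ?g2 !comp_assoc //.
Qed.

Definition SKB_idm (X : SkewBrace) : SKBHom X X := exist _ _ (SKB_id_morph X).
Definition SKB_comp (X Y Z : SkewBrace) (g : SKBHom Y Z) (f : SKBHom X Y) :
  SKBHom X Z := exist _ _ (@SKB_comp_morph X Y Z g f).

Lemma SKBHom_eq (X Y : SkewBrace) (f g : SKBHom X Y) :
  proj1_sig f = proj1_sig g -> f = g.
Proof.
case: f => f pf; case: g => g pg /= e; subst g; f_equal; apply: proof_irrelevance.
Qed.

Lemma SKB_assoc (A B C D : SkewBrace) (h : SKBHom C D) (g : SKBHom B C)
  (f : SKBHom A B) : SKB_comp h (SKB_comp g f) = SKB_comp (SKB_comp h g) f.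
Proof. apply: SKBHom_eq; exact: comp_assoc. Qed.

Lemma SKB_idl (A B : SkewBrace) (f : SKBHom A B) : SKB_comp (SKB_idm B) f = f.
Proof. apply: SKBHom_eq; exact: comp_idl. Qed.

Lemma SKB_idr (A B : SkewBrace) (f : SKBHom A B) : SKB_comp f (SKB_idm A) = f.
Proof. apply: SKBHom_eq; exact: comp_idr. Qed.

Definition SKBCat : Category :=
  {| Obj := SkewBrace; Hom := SKBHom; idm := SKB_idm; comp := SKB_comp;
     comp_assoc := SKB_assoc; comp_idl := SKB_idl; comp_idr := SKB_idr |}.

End SKB.

Section Pointed.
Variable C : Category.

Definition IsZeroObj (Z : Obj C) : Prop :=
  forall X : Obj C,
    (exists f : Hom Z X, forall g : Hom Z X, g = f) /\
    (exists f : Hom X Z, forall g : Hom X Z, g = f).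

Definition IsZeroMor (Z : Obj C) (X Y : Obj C) (h : Hom X Y) : Prop :=
  exists (a : Hom X Z) (b : Hom Z Y), h = b <o a.

Definition IsPullbackSq (A B D P : Obj C) (f : Hom A D) (g : Hom B D)
    (p1 : Hom P A) (p2 : Hom P B) : Prop :=
  f <o p1 = g <o p2 /\
  forall (W : Obj C) (a : Hom W A) (b : Hom W B), f <o a = g <o b ->
    exists! h : Hom W P, p1 <o h = a /\ p2 <o h = b.

Definition IsProductDiag (A B P : Obj C) (p1 : Hom P A) (p2 : Hom P B) : Prop :=
  forall (W : Obj C) (a : Hom W A) (b : Hom W B),
    exists! h : Hom W P, p1 <o h = a /\ p2 <o h = b.

(** (R, d0, d1) is an (internal) equivalence relation on X: d0, d1 jointly
    monic, reflexive, symmetric, transitive (transitivity stated on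
    generalized elements, i.e. for every pair composable through the
    pullback R x_X R). *)
Definition IsEquivRel (X R : Obj C) (d0 d1 : Hom R X) : Prop :=
  (forall (W : Obj C) (a b : Hom W R), d0 <o a = d0 <o b -> d1 <o a = d1 <o b -> a = b) /\
  (exists r : Hom X R, d0 <o r = idm X /\ d1 <o r = idm X) /\
  (exists s : Hom R R, d0 <o s = d1 /\ d1 <o s = d0) /\
  (forall (W : Obj C) (a b : Hom W R), d1 <o a = d0 <o b ->
     exists c : Hom W R, d0 <o c = d0 <o a /\ d1 <o c = d1 <o b).

(** Huq commutation [u, v] = 0 of u : U -> X and v : V -> X:
    there is phi : U x V -> X with phi <1,0> = u and phi <0,1> = v. *)
Definition Cooperate (Z : Obj C) (X U V : Obj C) (u : Hom U X) (v : Hom V X) : Prop :=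
  exists (P : Obj C) (p1 : Hom P U) (p2 : Hom P V),
    IsProductDiag p1 p2 /\
    exists phi : Hom P X,
      (forall l : Hom U P, p1 <o l = idm U -> IsZeroMor Z (p2 <o l) -> phi <o l = u) /\
      (forall k : Hom V P, IsZeroMor Z (p1 <o k) -> p2 <o k = idm V -> phi <o k = v).

(** Smith commutation [R, S] = 0: on R x_X S (pullback of d1^R and d0^S,
    with projections a, b) there is p with p r_S = d1^S and p l_R = d0^R,
    where l_R(xRy) = (xRy, ySy) and r_S(ySz) = (yRy, ySz). *)
Definition SmithTrivial (X R S : Obj C) (d0R d1R : Hom R X) (d0S d1S : Hom S X) : Prop :=
  forall (P : Obj C) (a : Hom P R) (b : Hom P S), IsPullbackSq d1R d0S a b ->
    exists p : Hom P X,
      (forall r : Hom S P, b <o r = idm S -> d0R <o (a <o r) = d0S ->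
          d1R <o (a <o r) = d0S -> p <o r = d1S) /\
      (forall l : Hom R P, a <o l = idm R -> d0S <o (b <o l) = d1R ->
          d1S <o (b <o l) = d1R -> p <o l = d0R).

(** (Huq=Smith) relative to the zero object Z: for every X and equivalence
    relations R, S on X, [I_R, I_S] = 0 implies [R, S] = 0, where
    I_R -> X is d1^R o xbar with xbar : I_R -> R the pullback of d0^R along
    the morphism Z -> X. *)
Definition HuqSmith (Z : Obj C) : Prop :=
  forall (X R S : Obj C) (d0R d1R : Hom R X) (d0S d1S : Hom S X),
    IsEquivRel d0R d1R -> IsEquivRel d0S d1S ->
    forall (zX : Hom Z X)
      (IR : Obj C) (xR : Hom IR R) (zR : Hom IR Z), IsPullbackSq d0R zX xR zR ->
    forall (IS : Obj C) (xS : Hom IS S) (zS : Hom IS Z), IsPullbackSq d0S zX xS zS ->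
    Cooperate Z (d1R <o xR) (d1S <o xS) ->
    SmithTrivial d0R d1R d0S d1S.

Definition SatisfiesHuqSmith : Prop :=
  (exists Z : Obj C, IsZeroObj Z) /\
  forall Z : Obj C, IsZeroObj Z -> HuqSmith Z.

End Pointed.

Definition TopHom (X Y : topologicalType) := {f : X -> Y | continuous f}.

Lemma Top_id_cont (X : topologicalType) : continuous (@id X).
Proof. by move=> x. Qed.

Lemma Top_comp_cont (X Y Z : topologicalType) (g : TopHom Y Z) (f : TopHom X Y) :
  continuous (proj1_sig g \o proj1_sig f).
Proof.
case: g => g cg; case: f => f cf /= x; exact: continuous_comp (cf x) (cg (f x)).
Qed.

Definition Top_idm (X : topologicalType) : TopHom X X := exist _ _ (@Top_id_cont X).
Definition Top_comp (X Y Z : topologicalType) (g : TopHom Y Z) (f : TopHom X Y) :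
  TopHom X Z := exist _ _ (@Top_comp_cont X Y Z g f).

Lemma TopHom_eq (X Y : topologicalType) (f g : TopHom X Y) :
  proj1_sig f = proj1_sig g -> f = g.
Proof.
case: f => f pf; case: g => g pg /= e; subst g; f_equal; apply: proof_irrelevance.
Qed.

Lemma Top_assoc (A B C D : topologicalType) (h : TopHom C D) (g : TopHom B C)
  (f : TopHom A B) : Top_comp h (Top_comp g f) = Top_comp (Top_comp h g) f.
Proof. exact: TopHom_eq. Qed.

Lemma Top_idl (A B : topologicalType) (f : TopHom A B) : Top_comp (Top_idm B) f = f.
Proof. exact: TopHom_eq. Qed.

Lemma Top_idr (A B : topologicalType) (f : TopHom A B) : Top_comp f (Top_idm A) = f.
Proof. exact: TopHom_eq. Qed.

Definition TopCat : Category :=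
  {| Obj := topologicalType; Hom := TopHom; idm := Top_idm; comp := Top_comp;
     comp_assoc := Top_assoc; comp_idl := Top_idl; comp_idr := Top_idr |}.

From Pilot Require Import Defs.
From mathcomp Require Import all_boot all_classical topology.

Set Implicit Arguments.
Unset Strict Implicit.
Unset Printing Implicit Defensive.

(* SKB E is pointed: the trivial brace on the terminal object is a zero
   object.  Pullbacks, hence products, of SKB E are computed as in E, so
   everything can be checked on generalized elements W -> X, on which both
   internal group structures act as ordinary groups.  If [I_R, I_S] = 0, the
   cooperator applied to the two factors of I_R x I_S shows that for u in I_R
   and v in I_S all of u * v, u o v, v * u, v o u coincide.  For x R y S z the
   Smith operator is p(x, y, z) = x * y^-* * z; it is *-multiplicative because
   x' * y'^-* (in I_R) commutes with y^-* * z (in I_S), and the skew brace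
   identity shows that it also equals x o y^-o o z, hence is o-multiplicative
   for the same reason. *)

Section CategoryFacts.
Variable C : Category.

Lemma pullback_jointly_monic (A B D P : C) (f : Hom A D) (g : Hom B D)
    (p1 : Hom P A) (p2 : Hom P B) :
  IsPullbackSq f g p1 p2 -> forall (W : C) (h h' : Hom W P),
  p1 <o h = p1 <o h' -> p2 <o h = p2 <o h' -> h = h'.
Proof.
case=> comm univ W h h' e1 e2.
have e : f <o (p1 <o h) = g <o (p2 <o h) by rewrite !comp_assoc comm.
have [h0 [_ uniq]] := univ W _ _ e.
by rewrite -(uniq h) // -(uniq h') // -e1 -e2.
Qed.

Lemma Pullback_isPullbackSq (A B D : C) (f : Hom A D) (g : Hom B D) (P : Pullback f g) :
  IsPullbackSq f g (pb1 P) (pb2 P).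
Proof.
split=> [|W a b e]; first exact: pb_comm.
exists (pb_pair P e); split; first by rewrite pb1_pair pb2_pair.
by move=> h [h1 h2]; symmetry; exact: pb_uniq.
Qed.

Lemma product_pullback_terminal (T A B P : C) (tA : Hom A T) (tB : Hom B T)
    (p1 : Hom P A) (p2 : Hom P B) :
  (forall (X : C) (u v : Hom X T), u = v) ->
  IsProductDiag p1 p2 -> IsPullbackSq tA tB p1 p2.
Proof. by move=> Tuniq prod; split=> [|W a b _]; [exact: Tuniq | exact: prod]. Qed.

End CategoryFacts.

Local Notation "` f" := (proj1_sig f) (at level 2).
Local Notation sval_eq e := (congr1 (@proj1_sig _ _) e).

Section SkewBraceTheory.
Variables (E : Category) (FL : FinLim E).
Implicit Types W : E.

Local Notation one := (Defs.one FL).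
Local Notation cst := Defs.cst.
Local Notation mu m x y := (m <o pr FL x y).

Lemma pr1_pr W A (x y : Hom W A) : pr1 (fl_prod FL A A) <o pr FL x y = x.
Proof. exact: pr1_pair. Qed.

Lemma pr2_pr W A (x y : Hom W A) : pr2 (fl_prod FL A A) <o pr FL x y = y.
Proof. exact: pr2_pair. Qed.

Lemma pr_comp W W' A (x y : Hom W A) (f : Hom W' W) :
  pr FL x y <o f = pr FL (x <o f) (y <o f).
Proof. by apply: pair_uniq; rewrite comp_assoc ?pr1_pr ?pr2_pr. Qed.

Lemma mu_comp W W' A B (m : Hom (sq FL A) B) (x y : Hom W A) (f : Hom W' W) :
  mu m x y <o f = mu m (x <o f) (y <o f).
Proof. by rewrite -comp_assoc pr_comp. Qed.

Lemma terminal_eq W (x y : Hom W one) : x = y.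
Proof. by rewrite (bang_uniq x) (bang_uniq y). Qed.

Lemma cst_one A (e : Hom one A) : cst one e = e.
Proof. by rewrite /Defs.cst (terminal_eq (bang _ one) (idm one)) comp_idr. Qed.

Lemma comp_cst W A B (e : Hom one A) (f : Hom A B) : f <o cst W e = cst W (f <o e).
Proof. exact: comp_assoc. Qed.

Section InternalGroup.
Variables (A : E) (m : Hom (sq FL A) A) (e : Hom one A) (i : Hom A A).
Hypothesis grp : IsInternalGroup m e i.

Lemma imulgA W (x y z : Hom W A) : mu m (mu m x y) z = mu m x (mu m y z).
Proof. by case: grp. Qed.

Lemma imul1g W (x : Hom W A) : mu m (cst W e) x = x.
Proof. by case: grp => _ []. Qed.

Lemma imulg1 W (x : Hom W A) : mu m x (cst W e) = x.
Proof. by case: grp => _ [] _ []. Qed.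

Lemma imulVg W (x : Hom W A) : mu m (i <o x) x = cst W e.
Proof. by case: grp => _ [] _ [] _ []. Qed.

Lemma imulgV W (x : Hom W A) : mu m x (i <o x) = cst W e.
Proof. by case: grp => _ [] _ [] _ []. Qed.

Lemma imulKg W (x y : Hom W A) : mu m (i <o x) (mu m x y) = y.
Proof. by rewrite -imulgA imulVg imul1g. Qed.

Lemma imulKVg W (x y : Hom W A) : mu m x (mu m (i <o x) y) = y.
Proof. by rewrite -imulgA imulgV imul1g. Qed.

Lemma imulgKV W (x y : Hom W A) : mu m (mu m y (i <o x)) x = y.
Proof. by rewrite imulgA imulVg imulg1. Qed.

Lemma imulgI W (x y z : Hom W A) : mu m x y = mu m x z -> y = z.
Proof. by move=> eq_xy_xz; rewrite -(imulKg x y) eq_xy_xz imulKg. Qed.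

Lemma iinvg_unique W (x y : Hom W A) : mu m x y = cst W e -> y = i <o x.
Proof. by move=> xy1; apply: (@imulgI _ x); rewrite xy1 imulgV. Qed.

Lemma iinvMg W (x y : Hom W A) : i <o mu m x y = mu m (i <o y) (i <o x).
Proof. by symmetry; apply: iinvg_unique; rewrite imulgA -(imulgA y) imulgV imul1g imulgV. Qed.

Lemma imulg_idem W (x : Hom W A) : mu m x x = x -> x = cst W e.
Proof. by move=> xx; apply: (@imulgI _ x); rewrite xx imulg1. Qed.

Definition maltsev W (x y z : Hom W A) : Hom W A := mu m (mu m x (i <o y)) z.

Lemma maltsevM W (x0 x1 x2 y0 y1 y2 : Hom W A) :
  mu m (mu m y0 (i <o y1)) (mu m (i <o x1) x2)
    = mu m (mu m (i <o x1) x2) (mu m y0 (i <o y1)) ->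
  maltsev (mu m x0 y0) (mu m x1 y1) (mu m x2 y2)
    = mu m (maltsev x0 x1 x2) (maltsev y0 y1 y2).
Proof.
move=> yx_xy; rewrite /maltsev iinvMg.
transitivity (mu m (mu m x0 (mu m (mu m y0 (i <o y1)) (mu m (i <o x1) x2))) y2).
  by rewrite !imulgA.
by rewrite yx_xy !imulgA.
Qed.

End InternalGroup.

Section InternalGroupMorphism.
Variables (A B : E) (mA : Hom (sq FL A) A) (eA : Hom one A) (iA : Hom A A).
Variables (mB : Hom (sq FL B) B) (eB : Hom one B) (iB : Hom B B).
Hypotheses (grpA : IsInternalGroup mA eA iA) (grpB : IsInternalGroup mB eB iB).
Variable h : Hom A B.
Hypothesis hM : forall W (x y : Hom W A), h <o mu mA x y = mu mB (h <o x) (h <o y).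

Lemma ihom1 W : h <o cst W eA = cst W eB.
Proof. by apply: (imulg_idem grpB); rewrite -hM (imul1g grpA). Qed.

Lemma ihomV W (x : Hom W A) : h <o (iA <o x) = iB <o (h <o x).
Proof. by apply: (iinvg_unique grpB); rewrite -hM (imulgV grpA) ihom1. Qed.

End InternalGroupMorphism.

(* [true] selects the group structure [*], [false] the structure [o]. *)
Definition sb_op (X : SkewBrace FL) (b : bool) : Hom (sq FL X) X :=
  if b then sb_star X else sb_circ X.

Definition sb_inv (X : SkewBrace FL) (b : bool) : Hom X X :=
  if b then sb_inv_star X else sb_inv_circ X.

Lemma sb_grp (X : SkewBrace FL) b : IsInternalGroup (sb_op X b) (sb_unit X) (sb_inv X b).
Proof. by case: b; [exact: sb_star_grp | exact: sb_circ_grp]. Qed.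

Lemma sb_op_brace (X : SkewBrace FL) W (a b c : Hom W X) :
  mu (sb_op X false) a (mu (sb_op X true) b c)
  = mu (sb_op X true) (mu (sb_op X true) (mu (sb_op X false) a b) (sb_inv X true <o a))
                      (mu (sb_op X false) a c).
Proof. exact: sb_brace. Qed.

Section SkewBraceMorphism.
Variables (X Y : SkewBrace FL) (f : SKBHom X Y).

Lemma skb_homM b W (x y : Hom W X) :
  `f <o mu (sb_op X b) x y = mu (sb_op Y b) (`f <o x) (`f <o y).
Proof. by case: f => f' [fM fM']; case: b; [exact: fM | exact: fM']. Qed.

Lemma skb_hom1 W : `f <o cst W (sb_unit X) = cst W (sb_unit Y).
Proof. exact: (ihom1 (sb_grp X true) (sb_grp Y true) (skb_homM true)). Qed.

Lemma skb_hom_unit : `f <o sb_unit X = sb_unit Y.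
Proof. by have := skb_hom1 one; rewrite !cst_one. Qed.

Lemma skb_homV b W (x : Hom W X) : `f <o (sb_inv X b <o x) = sb_inv Y b <o (`f <o x).
Proof. exact: (ihomV (sb_grp X b) (sb_grp Y b) (skb_homM b)). Qed.

End SkewBraceMorphism.

Lemma sb_maltsev_circ (X : SkewBrace FL) W (x y z : Hom W X) :
  let u := mu (sb_op X false) x (sb_inv X false <o y) in
  let v := mu (sb_op X true) (sb_inv X true <o y) z in
  mu (sb_op X false) u v = mu (sb_op X true) u v ->
  maltsev (sb_op X true) (sb_inv X true) x y z
    = maltsev (sb_op X false) (sb_inv X false) x y z.
Proof.
move=> u v uv.
have zE : z = mu (sb_op X true) y v by rewrite /v (imulKVg (sb_grp X true)).
have xE : mu (sb_op X false) u y = x by rewrite /u (imulgKV (sb_grp X false)).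
rewrite /maltsev -/u {2}zE sb_op_brace xE uv !(imulgA (sb_grp X true)).
by rewrite (imulKg (sb_grp X true)).
Qed.

Lemma terminal_group : IsInternalGroup (bang (fl_term FL) (sq FL one)) (idm one) (idm one).
Proof. by do ![split] => *; apply: terminal_eq. Qed.

Definition trivial_brace : SkewBrace FL :=
  {| sb_car := one; sb_star := bang _ _; sb_circ := bang _ _;
     sb_unit := idm _; sb_inv_star := idm _; sb_inv_circ := idm _;
     sb_star_grp := terminal_group; sb_circ_grp := terminal_group;
     sb_brace := fun W a b c => terminal_eq _ _ |}.

Lemma unit_is_skb_morph (X : SkewBrace FL) :
  IsSKBMorph (X := trivial_brace) (Y := X) (sb_unit X).
Proof.
have unitM b W (x y : Hom W one) :
    sb_unit X <o mu (sb_op trivial_brace b) x y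
    = mu (sb_op X b) (sb_unit X <o x) (sb_unit X <o y).
  rewrite (terminal_eq x (bang (fl_term FL) W)) (terminal_eq y (bang (fl_term FL) W)).
  rewrite (terminal_eq (mu _ _ _) (bang (fl_term FL) W)).
  exact/esym/(imul1g (sb_grp X b)).
by split; [exact: (unitM true) | exact: (unitM false)].
Qed.

Definition unit_hom (X : SkewBrace FL) : SKBHom trivial_brace X :=
  exist _ _ (unit_is_skb_morph X).

Lemma trivial_brace_homE (X : SkewBrace FL) (g : SKBHom trivial_brace X) :
  `g = sb_unit X.
Proof. by have := skb_hom1 g one; rewrite !cst_one => <-; rewrite comp_idr. Qed.

Lemma bang_is_skb_morph (X : SkewBrace FL) :
  IsSKBMorph (X := X) (Y := trivial_brace) (bang (fl_term FL) X).
Proof. by split=> *; apply: terminal_eq. Qed.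

Definition bang_hom (X : SkewBrace FL) : SKBHom X trivial_brace :=
  exist _ _ (bang_is_skb_morph X).

Lemma trivial_brace_hom_eq (X : SkewBrace FL) (f g : SKBHom X trivial_brace) : f = g.
Proof. by apply: SKBHom_eq; exact: terminal_eq. Qed.

Lemma trivial_brace_zero : IsZeroObj (C := SKBCat FL) trivial_brace.
Proof.
move=> X; split.
  by exists (unit_hom X) => g; apply: SKBHom_eq; rewrite trivial_brace_homE.
by exists (bang_hom X) => g; exact: trivial_brace_hom_eq.
Qed.

Lemma zero_obj_elem (Z : SkewBrace FL) : IsZeroObj (C := SKBCat FL) Z ->
  forall W (z : Hom W Z), z = cst W (sb_unit Z).
Proof.
move=> HZ W z.
have [[u _] [v _]] := HZ trivial_brace.
have [[idZ uniqZ] _] := HZ Z.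
have vu : `v <o `u = idm (Z : E).
  exact: (sval_eq (etrans (uniqZ (SKB_comp v u)) (esym (uniqZ (SKB_idm Z))))).
rewrite -[z]comp_idl -vu -comp_assoc trivial_brace_homE.
by rewrite (terminal_eq (`u <o z) (bang (fl_term FL) W)).
Qed.

Lemma zero_mor_elem (Z X Y : SkewBrace FL) (h : SKBHom X Y) :
  IsZeroObj (C := SKBCat FL) Z -> IsZeroMor (C := SKBCat FL) Z h ->
  forall W (x : Hom W X), `h <o x = cst W (sb_unit Y).
Proof.
move=> HZ [a [b ->]] W x /=.
by rewrite -comp_assoc (zero_obj_elem HZ (`a <o x)) skb_hom1.
Qed.

Section PullbackBrace.
Variables (X Y D : SkewBrace FL) (f : SKBHom X D) (g : SKBHom Y D).
Let PB := fl_pb FL (`f) (`g).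
Let p1 : Hom (PB : E) X := pb1 PB.
Let p2 : Hom (PB : E) Y := pb2 PB.
Let q1 := pr1 (fl_prod FL PB PB).
Let q2 := pr2 (fl_prod FL PB PB).

Lemma pb_comm_at W (h : Hom W PB) : `f <o (p1 <o h) = `g <o (p2 <o h).
Proof. by rewrite !comp_assoc pb_comm. Qed.

Lemma pb_op_eq b :
  `f <o mu (sb_op X b) (p1 <o q1) (p1 <o q2) = `g <o mu (sb_op Y b) (p2 <o q1) (p2 <o q2).
Proof. by rewrite !skb_homM !pb_comm_at. Qed.

Lemma pb_unit_eq : `f <o sb_unit X = `g <o sb_unit Y.
Proof. by rewrite !skb_hom_unit. Qed.

Lemma pb_inv_eq b : `f <o (sb_inv X b <o p1) = `g <o (sb_inv Y b <o p2).
Proof. by rewrite !skb_homV pb_comm. Qed.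

Definition pb_op b : Hom (sq FL PB) PB := pb_pair PB (pb_op_eq b).
Definition pb_unit : Hom one PB := pb_pair PB pb_unit_eq.
Definition pb_inv b : Hom PB PB := pb_pair PB (pb_inv_eq b).

Lemma p1_op b W (x y : Hom W PB) :
  p1 <o mu (pb_op b) x y = mu (sb_op X b) (p1 <o x) (p1 <o y).
Proof. by rewrite comp_assoc pb1_pair mu_comp -!comp_assoc pr1_pr pr2_pr. Qed.

Lemma p2_op b W (x y : Hom W PB) :
  p2 <o mu (pb_op b) x y = mu (sb_op Y b) (p2 <o x) (p2 <o y).
Proof. by rewrite comp_assoc pb2_pair mu_comp -!comp_assoc pr1_pr pr2_pr. Qed.

Lemma p1_unit W : p1 <o cst W pb_unit = cst W (sb_unit X).
Proof. by rewrite comp_cst pb1_pair. Qed.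

Lemma p2_unit W : p2 <o cst W pb_unit = cst W (sb_unit Y).
Proof. by rewrite comp_cst pb2_pair. Qed.

Lemma p1_inv b W (x : Hom W PB) : p1 <o (pb_inv b <o x) = sb_inv X b <o (p1 <o x).
Proof. by rewrite comp_assoc pb1_pair -comp_assoc. Qed.

Lemma p2_inv b W (x : Hom W PB) : p2 <o (pb_inv b <o x) = sb_inv Y b <o (p2 <o x).
Proof. by rewrite comp_assoc pb2_pair -comp_assoc. Qed.

Lemma pb_elem_eq W (h h' : Hom W PB) : p1 <o h = p1 <o h' -> p2 <o h = p2 <o h' -> h = h'.
Proof. by move=> e1 e2; exact: (pullback_jointly_monic (Pullback_isPullbackSq PB) e1 e2). Qed.

Local Ltac pb_ext :=
  apply: pb_elem_eq; rewrite ?p1_op ?p2_op ?p1_unit ?p2_unit ?p1_inv ?p2_inv.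

Lemma pb_group b : IsInternalGroup (pb_op b) pb_unit (pb_inv b).
Proof.
split; [|split; [|split; [|split]]] => W x *; pb_ext.
all: first [ exact: (imulgA (sb_grp _ _)) | exact: (imul1g (sb_grp _ _))
           | exact: (imulg1 (sb_grp _ _)) | exact: (imulVg (sb_grp _ _))
           | exact: (imulgV (sb_grp _ _)) ].
Qed.

Lemma pb_brace_axiom W (a b c : Hom W PB) :
  mu (pb_op false) a (mu (pb_op true) b c)
  = mu (pb_op true) (mu (pb_op true) (mu (pb_op false) a b) (pb_inv true <o a))
                    (mu (pb_op false) a c).
Proof. by pb_ext; exact: sb_brace. Qed.

Definition pb_brace : SkewBrace FL :=
  {| sb_car := PB; sb_star := pb_op true; sb_circ := pb_op false; sb_unit := pb_unit;
     sb_inv_star := pb_inv true; sb_inv_circ := pb_inv false;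
     sb_star_grp := pb_group true; sb_circ_grp := pb_group false;
     sb_brace := pb_brace_axiom |}.

Lemma pb_proj1_morph : IsSKBMorph (X := pb_brace) (Y := X) p1.
Proof. by split=> W x y; [exact: (p1_op true) | exact: (p1_op false)]. Qed.

Lemma pb_proj2_morph : IsSKBMorph (X := pb_brace) (Y := Y) p2.
Proof. by split=> W x y; [exact: (p2_op true) | exact: (p2_op false)]. Qed.

Definition pb_proj1 : SKBHom pb_brace X := exist _ _ pb_proj1_morph.
Definition pb_proj2 : SKBHom pb_brace Y := exist _ _ pb_proj2_morph.

Lemma pb_proj_comm : SKB_comp f pb_proj1 = SKB_comp g pb_proj2.
Proof. by apply: SKBHom_eq; exact: pb_comm. Qed.

Lemma pb_pair_morph (V : SkewBrace FL) (a : SKBHom V X) (c : SKBHom V Y)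
    (ac : `f <o `a = `g <o `c) :
  IsSKBMorph (X := V) (Y := pb_brace) (pb_pair PB ac).
Proof.
have pair1 W (z : Hom W V) : p1 <o (pb_pair PB ac <o z) = `a <o z.
  by rewrite comp_assoc pb1_pair.
have pair2 W (z : Hom W V) : p2 <o (pb_pair PB ac <o z) = `c <o z.
  by rewrite comp_assoc pb2_pair.
have pairM b W (x y : Hom W V) :
    pb_pair PB ac <o mu (sb_op V b) x y
    = mu (pb_op b) (pb_pair PB ac <o x) (pb_pair PB ac <o y).
  by pb_ext; rewrite ?pair1 ?pair2 skb_homM.
by split=> W x y; [exact: (pairM true) | exact: (pairM false)].
Qed.

End PullbackBrace.

Lemma skb_pullback_forget (A B D P : SkewBrace FL) (f : SKBHom A D) (g : SKBHom B D)
    (x : SKBHom P A) (y : SKBHom P B) :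
  IsPullbackSq (C := SKBCat FL) f g x y -> IsPullbackSq (C := E) (`f) (`g) (`x) (`y).
Proof.
case=> comm univ.
have comm' : `f <o `x = `g <o `y := sval_eq comm.
pose Q := fl_pb FL (`f) (`g).
have [th [[th1 th2] _]] := univ _ _ _ (pb_proj_comm f g).
have xth : `x <o `th = pb1 Q := sval_eq th1.
have yth : `y <o `th = pb2 Q := sval_eq th2.
pose th' : SKBHom P (pb_brace f g) := exist _ _ (pb_pair_morph comm').
have th_th' : `th <o `th' = idm (P : E).
  have [h0 [_ uniq]] := univ _ x y comm.
  have cone_th_th' : SKB_comp x (SKB_comp th th') = x /\ SKB_comp y (SKB_comp th th') = y.
    by split; apply: SKBHom_eq; rewrite /= comp_assoc ?xth ?yth ?pb1_pair ?pb2_pair.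
  have cone_id : SKB_comp x (SKB_idm P) = x /\ SKB_comp y (SKB_idm P) = y.
    by split; apply: SKBHom_eq; exact: comp_idr.
  exact: (sval_eq (etrans (esym (uniq _ cone_th_th')) (uniq _ cone_id))).
split=> // W a b e.
exists (`th <o pb_pair Q e); split; first by rewrite !comp_assoc xth yth pb1_pair pb2_pair.
move=> h [xh yh].
have th'h : `th' <o h = pb_pair Q e.
  by apply: pb_uniq; rewrite comp_assoc ?pb1_pair ?pb2_pair.
by rewrite -th'h comp_assoc th_th' comp_idl.
Qed.

Lemma skb_product_factors_mul (U V P : SkewBrace FL) (p1 : SKBHom P U) (p2 : SKBHom P V) :
  IsProductDiag (C := SKBCat FL) p1 p2 ->
  forall W (x y : Hom W P),
  `p2 <o x = cst W (sb_unit V) -> `p1 <o y = cst W (sb_unit U) ->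
  forall b, mu (sb_op P b) x y = mu (sb_op P true) x y /\
            mu (sb_op P b) y x = mu (sb_op P true) x y.
Proof.
move=> HP W x y p2x p1y b.
have Psq := product_pullback_terminal (C := SKBCat FL) (bang_hom U) (bang_hom V) (@trivial_brace_hom_eq) HP.
have elem_eq := pullback_jointly_monic (skb_pullback_forget Psq).
split; apply: elem_eq; rewrite !skb_homM ?p2x ?p1y.
- by rewrite (imulg1 (sb_grp _ b)) (imulg1 (sb_grp _ true)).
- by rewrite (imul1g (sb_grp _ b)) (imul1g (sb_grp _ true)).
- by rewrite (imul1g (sb_grp _ b)) (imulg1 (sb_grp _ true)).
- by rewrite (imulg1 (sb_grp _ b)) (imul1g (sb_grp _ true)).
Qed.

Lemma cooperate_mul (Z X IR IS : SkewBrace FL) (iR : SKBHom IR X) (iS : SKBHom IS X) :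
  IsZeroObj (C := SKBCat FL) Z -> Cooperate (C := SKBCat FL) Z iR iS ->
  forall W (i : Hom W IR) (j : Hom W IS) b,
  mu (sb_op X b) (`iR <o i) (`iS <o j) = mu (sb_op X true) (`iR <o i) (`iS <o j) /\
  mu (sb_op X b) (`iS <o j) (`iR <o i) = mu (sb_op X true) (`iR <o i) (`iS <o j).
Proof.
move=> HZ [P [p1 [p2 [HP [phi [phi_l phi_k]]]]]] W i j b.
have [[zR _] [Rz _]] := HZ IR.
have [[zS _] [Sz _]] := HZ IS.
have [l [[l1 l2] _]] := HP _ (SKB_idm IR) (SKB_comp zS Rz).
have [k [[k1 k2] _]] := HP _ (SKB_comp zR Sz) (SKB_idm IS).
have l2_zero : IsZeroMor (C := SKBCat FL) Z (SKB_comp p2 l) by exists Rz, zS.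
have k1_zero : IsZeroMor (C := SKBCat FL) Z (SKB_comp p1 k) by exists Sz, zR.
have phil : `phi <o `l = `iR := sval_eq (phi_l l l1 l2_zero).
have phik : `phi <o `k = `iS := sval_eq (phi_k k k1_zero k2).
have p2li : `p2 <o (`l <o i) = cst W (sb_unit IS).
  by rewrite comp_assoc; exact: (zero_mor_elem HZ l2_zero).
have p1kj : `p1 <o (`k <o j) = cst W (sb_unit IR).
  by rewrite comp_assoc; exact: (zero_mor_elem HZ k1_zero).
have [lk kl] := skb_product_factors_mul HP p2li p1kj b.
by rewrite -phil -phik -!comp_assoc -!skb_homM lk kl.
Qed.

Definition in_normalization (X R : SkewBrace FL) (d0 d1 : SKBHom R X) W (u : Hom W X) :=
  exists t : Hom W R, `d0 <o t = cst W (sb_unit X) /\ `d1 <o t = u.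

Lemma normalization_lift (Z X R IR : SkewBrace FL) (d0 d1 : SKBHom R X)
    (zX : SKBHom Z X) (x : SKBHom IR R) (z : SKBHom IR Z) :
  IsPullbackSq (C := SKBCat FL) d0 zX x z ->
  forall W (u : Hom W X), in_normalization d0 d1 u ->
  exists i : Hom W IR, `d1 <o (`x <o i) = u.
Proof.
move=> /skb_pullback_forget [_ univ] W u [t [t0 t1]].
have e : `d0 <o t = `zX <o cst W (sb_unit Z) by rewrite t0 skb_hom1.
have [i [[xi _] _]] := univ W t _ e.
by exists i; rewrite xi.
Qed.

Section Normalization.
Variables (X R : SkewBrace FL) (d0 d1 : SKBHom R X).
Hypothesis eqR : IsEquivRel (C := SKBCat FL) d0 d1.

Lemma equiv_refl_sym :
  exists (r : SKBHom X R) (s : SKBHom R R),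
  [/\ forall W (x : Hom W X), `d0 <o (`r <o x) = x,
      forall W (x : Hom W X), `d1 <o (`r <o x) = x,
      forall W (z : Hom W R), `d0 <o (`s <o z) = `d1 <o z &
      forall W (z : Hom W R), `d1 <o (`s <o z) = `d0 <o z].
Proof.
case: eqR => _ [[r [r0 r1]] [[s [s0 s1]] _]].
have r0' : `d0 <o `r = idm (X : E) := sval_eq r0.
have r1' : `d1 <o `r = idm (X : E) := sval_eq r1.
exists r, s; split.
- by move=> W x; rewrite comp_assoc r0' comp_idl.
- by move=> W x; rewrite comp_assoc r1' comp_idl.
- by move=> W z; rewrite comp_assoc (sval_eq s0 : `d0 <o `s = `d1).
- by move=> W z; rewrite comp_assoc (sval_eq s1 : `d1 <o `s = `d0).
Qed.

Lemma normalization_ldiv b W (t : Hom W R) :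
  in_normalization d0 d1 (mu (sb_op X b) (sb_inv X b <o (`d0 <o t)) (`d1 <o t)).
Proof.
have [r [_ [r0 r1 _ _]]] := equiv_refl_sym.
exists (mu (sb_op R b) (sb_inv R b <o (`r <o (`d0 <o t))) t).
by rewrite !skb_homM !skb_homV r0 r1 (imulVg (sb_grp X b)).
Qed.

Lemma normalization_div b W (t : Hom W R) :
  in_normalization d0 d1 (mu (sb_op X b) (`d0 <o t) (sb_inv X b <o (`d1 <o t))).
Proof.
have [r [s [r0 r1 s0 s1]]] := equiv_refl_sym.
exists (`s <o mu (sb_op R b) t (sb_inv R b <o (`r <o (`d1 <o t)))).
by rewrite s0 s1 !skb_homM !skb_homV r0 r1 (imulgV (sb_grp X b)).
Qed.

End Normalization.

Section SmithOperator.
Variables (X R S : SkewBrace FL) (d0R d1R : SKBHom R X) (d0S d1S : SKBHom S X).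
Hypotheses (eqR : IsEquivRel (C := SKBCat FL) d0R d1R)
           (eqS : IsEquivRel (C := SKBCat FL) d0S d1S).
Hypothesis normalizations_mul : forall W (u v : Hom W X),
  in_normalization d0R d1R u -> in_normalization d0S d1S v ->
  forall b, mu (sb_op X b) u v = mu (sb_op X true) u v /\
            mu (sb_op X b) v u = mu (sb_op X true) u v.

Definition smith_op W (t : Hom W R) (s : Hom W S) : Hom W X :=
  maltsev (sb_op X true) (sb_inv X true) (`d0R <o t) (`d1R <o t) (`d1S <o s).

Lemma smith_op_comp W W' (t : Hom W R) (s : Hom W S) (h : Hom W' W) :
  smith_op t s <o h = smith_op (t <o h) (s <o h).
Proof. by rewrite /smith_op /maltsev !mu_comp -!comp_assoc. Qed.

Lemma normalization_ldiv_at b W (t : Hom W R) (s : Hom W S) : `d1R <o t = `d0S <o s ->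
  in_normalization d0S d1S (mu (sb_op X b) (sb_inv X b <o (`d1R <o t)) (`d1S <o s)).
Proof. by move=> ->; exact: normalization_ldiv. Qed.

Lemma smith_opE b W (t : Hom W R) (s : Hom W S) : `d1R <o t = `d0S <o s ->
  smith_op t s = maltsev (sb_op X b) (sb_inv X b) (`d0R <o t) (`d1R <o t) (`d1S <o s).
Proof.
case: b => // ts; apply: sb_maltsev_circ.
exact: (normalizations_mul (normalization_div eqR false t) (normalization_ldiv_at true ts) false).1.
Qed.

Lemma smith_opM b W (t t' : Hom W R) (s s' : Hom W S) :
  `d1R <o t = `d0S <o s -> `d1R <o t' = `d0S <o s' ->
  smith_op (mu (sb_op R b) t t') (mu (sb_op S b) s s')
    = mu (sb_op X b) (smith_op t s) (smith_op t' s').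
Proof.
move=> ts ts'.
have tsM : `d1R <o mu (sb_op R b) t t' = `d0S <o mu (sb_op S b) s s'.
  by rewrite !skb_homM ts ts'.
rewrite !(smith_opE b) // !skb_homM; apply: (maltsevM (sb_grp X b)).
have [uv vu] := normalizations_mul (normalization_div eqR b t') (normalization_ldiv_at b ts) b.
exact: etrans uv (esym vu).
Qed.

Lemma smith_op_morph (P : SkewBrace FL) (a : SKBHom P R) (c : SKBHom P S) :
  `d1R <o `a = `d0S <o `c -> IsSKBMorph (X := P) (Y := X) (smith_op (`a) (`c)).
Proof.
move=> ac.
have acW W (z : Hom W P) : `d1R <o (`a <o z) = `d0S <o (`c <o z) by rewrite !comp_assoc ac.
have opM b W (x y : Hom W P) :
    smith_op (`a) (`c) <o mu (sb_op P b) x y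
    = mu (sb_op X b) (smith_op (`a) (`c) <o x) (smith_op (`a) (`c) <o y).
  by rewrite !smith_op_comp !skb_homM (smith_opM b (acW _ x) (acW _ y)).
by split; [exact: (opM true) | exact: (opM false)].
Qed.

End SmithOperator.

Lemma skb_huq_smith (Z : SkewBrace FL) :
  IsZeroObj (C := SKBCat FL) Z -> HuqSmith (C := SKBCat FL) Z.
Proof.
move=> HZ X R S d0R d1R d0S d1S eqR eqS zX IR xR ? pbR IS xS ? pbS coop P a c [ac _].
have normalizations_mul W (u v : Hom W X) :
    in_normalization d0R d1R u -> in_normalization d0S d1S v ->
    forall b, mu (sb_op X b) u v = mu (sb_op X true) u v /\
              mu (sb_op X b) v u = mu (sb_op X true) u v.
  move=> /(normalization_lift pbR) [i <-] /(normalization_lift pbS) [j <-] b.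
  by rewrite !comp_assoc; exact: (cooperate_mul HZ coop i j b).
have ac' : `d1R <o `a = `d0S <o `c := sval_eq ac.
exists (exist _ _ (smith_op_morph eqR eqS normalizations_mul ac')); split.
- move=> r cr ar0 ar1; apply: SKBHom_eq => /=.
  rewrite smith_op_comp /smith_op /maltsev.
  rewrite (sval_eq ar0 : `d0R <o (`a <o `r) = `d0S).
  rewrite (sval_eq ar1 : `d1R <o (`a <o `r) = `d0S).
  rewrite (sval_eq cr : `c <o `r = idm (S : E)) comp_idr.
  by rewrite (imulgV (sb_grp X true)) (imul1g (sb_grp X true)).
- move=> l al _ cl1; apply: SKBHom_eq => /=.
  rewrite smith_op_comp /smith_op /maltsev.
  rewrite (sval_eq al : `a <o `l = idm (R : E)) comp_idr comp_idr.
  rewrite (sval_eq cl1 : `d1S <o (`c <o `l) = `d1R).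
  by rewrite (imulgKV (sb_grp X true)).
Qed.

Lemma skb_satisfies_huq_smith : SatisfiesHuqSmith (SKBCat FL).
Proof.
split; first by exists trivial_brace; exact: trivial_brace_zero.
by move=> Z; exact: skb_huq_smith.
Qed.

End SkewBraceTheory.

Theorem corollary3p11 :
  (forall (E : Category) (FL : FinLim E), SatisfiesHuqSmith (SKBCat FL)) /\
  (forall FL : FinLim TopCat, SatisfiesHuqSmith (SKBCat FL)).
Proof. by split=> [E FL | FL]; exact: skb_satisfies_huq_smith. Qed.
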